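(* Let $K$ be a field, $n\ge1$, $R=K[x_1,\ldots,x_{2n+1}]$, and let $C_{2n+1}$ be the cycle graph with vertices $x_1,\ldots,x_{2n+1}$ and edges $\{x_i,x_{i+1}\}$ for $i=1,\ldots,2n$ and $\{x_{2n+1},x_1\}$. Then the edge ideal $I(C_{2n+1})=(x_1x_2,x_2x_3,\ldots,x_{2n}x_{2n+1},x_{2n+1}x_1)\subset R$ has the nearly copersistence property.
   Context: A monomial ideal $I\subset R$ has the nearly copersistence property if there exist a positive integer $s$ and a monomial prime ideal $\mathfrak{p}$ such that $\mathrm{Ass}_R(R/I^m)\cup\{\mathfrak{p}\}\supseteq\mathrm{Ass}_R(R/I^{m+1})$ for all $1\le m\le s$, and $\mathrm{Ass}_R(R/I^m)\supseteq\mathrm{Ass}_R(R/I^{m+1})$ for all $m\ge s+1$. *)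

From HB Require Import structures.
From mathcomp Require Import all_boot all_order all_algebra.
From mathcomp Require Import mpoly.
Set Implicit Arguments. Unset Strict Implicit. Unset Printing Implicit Defensive.
Import GRing.Theory.
Local Open Scope ring_scope.

(* Subsets of the polynomial ring R = K[x_0, ..., x_{N-1}] are predicates. *)
Section Ideals.
Variables (K : fieldType) (N : nat).
Notation R := {mpoly K[N]}.

Inductive ideal_gen (S : R -> Prop) : R -> Prop :=
| ideal_gen0 : ideal_gen S 0
| ideal_genD (c g f : R) : S g -> ideal_gen S f -> ideal_gen S (f + c * g).

Definition ideal_mul (I J : R -> Prop) : R -> Prop :=
  ideal_gen (fun h => exists f g, I f /\ J g /\ h = f * g).

Fixpoint ideal_pow (I : R -> Prop) (m : nat) : R -> Prop :=
  match m with
  | 0 => fun _ => True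
  | m'.+1 => ideal_mul (ideal_pow I m') I
  end.

Definition is_ideal (P : R -> Prop) : Prop :=
  P 0 /\ (forall f g, P f -> P g -> P (f + g)) /\ (forall c f, P f -> P (c * f)).

Definition is_prime (P : R -> Prop) : Prop :=
  is_ideal P /\ ~ P 1 /\ (forall f g, P (f * g) -> P f \/ P g).

(* P \in Ass_R(R/I): P is a prime ideal of the form (I : f) for some f in R. *)
Definition Ass (I : R -> Prop) (P : R -> Prop) : Prop :=
  is_prime P /\ exists f : R, forall g, P g <-> I (g * f).

Definition monomial_prime (P : R -> Prop) : Prop :=
  is_prime P /\
  exists S : {set 'I_N},
    forall g, P g <-> ideal_gen (fun h => exists2 i, i \in S & h = 'X_i) g.

Definition edge_ideal (e : rel 'I_N) : R -> Prop :=
  ideal_gen (fun h => exists i j, e i j /\ h = 'X_i * 'X_j).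

(* Nearly copersistence property of I. Ass sets are compared elementwise;
   "P = p" for ideals is extensional equality of the underlying sets. *)
Definition nearly_copersistent (I : R -> Prop) : Prop :=
  exists (s : nat) (p : R -> Prop),
    [/\ (0 < s)%N, monomial_prime p,
     (forall m : nat, (1 <= m <= s)%N ->
       forall P, Ass (ideal_pow I m.+1) P ->
         Ass (ideal_pow I m) P \/ (forall g, P g <-> p g)) &
     (forall m : nat, (s.+1 <= m)%N ->
       forall P, Ass (ideal_pow I m.+1) P -> Ass (ideal_pow I m) P)].
End Ideals.

Definition cycle_rel (N : nat) : rel 'I_N :=
  fun i j => (val j == (val i).+1 %% N)%N || (val i == (val j).+1 %% N)%N.

From mathcomp Require Import all_boot all_order all_algebra.
From mathcomp Require Import mpoly zify.
From Stdlib Require Import ClassicalEpsilon Classical_Prop.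
Set Implicit Arguments. Unset Strict Implicit. Unset Printing Implicit Defensive.
Import GRing.Theory.

(* Every power I^k of the edge ideal I of the odd cycle C_(2n+1) is a monomial
   ideal: a monomial lies in I^k iff it is divisible by a product of k edges.
   Let P = (I^k : f) be prime and T the set of vertices whose variables lie
   in P. If T is everything, P is the maximal ideal m = (x_1, ..., x_(2n+1)).
   Otherwise some monomial x^mu x^t, with t in the support of f and mu giving
   exponent k to each vertex outside T, is not in I^k; a Koenig-type duality
   on the path obtained by cutting the cycle at a vertex outside T then shows
   that T is a minimal vertex cover, and a saturation argument that
   P = (x_c : c in T). Such a minimal prime is associated to every I^j, and
   m is associated to I^k as soon as k > n, witnessed by the monomial
   x_1 ... x_(2n+1) (x_1 x_2)^(k-n-1) of degree 2k - 1. Hence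
   Ass(I^(k+1)) is contained in Ass(I^k) + {m} for all k, and in Ass(I^k)
   once k > n. *)

Section MonomialIdeals.
Local Open Scope ring_scope.
Variables (K : fieldType) (N : nat).
Local Notation R := {mpoly K[N]}.
Implicit Types (f g h : R) (S I J P Q : R -> Prop) (U V W : 'X_{1..N} -> Prop).

Lemma is_ideal_ext I J : (forall f, I f <-> J f) -> is_ideal J -> is_ideal I.
Proof.
move=> IJ [J0 [JD JM]]; split; first exact/IJ.
by split=> [f g /IJ If /IJ Ig | c f /IJ If]; apply/IJ; [apply: JD | apply: JM].
Qed.

Lemma is_prime_ext P Q : (forall f, P f <-> Q f) -> is_prime Q -> is_prime P.
Proof.
move=> PQ [Qideal [Q1 Qprime]]; split; first exact: is_ideal_ext Qideal.
by split=> [/PQ // | f g /PQ /Qprime [] /PQ]; [left | right].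
Qed.

Lemma idealB I f g : is_ideal I -> I f -> I g -> I (f - g).
Proof. by case=> _ [ID IM] If Ig; rewrite -mulN1r; apply/ID/IM. Qed.

Lemma ideal_gen_min S I :
  is_ideal I -> (forall g, S g -> I g) -> forall f, ideal_gen S f -> I f.
Proof.
case=> I0 [ID IM] SI f; elim=> [|c g {}f Sg _ If]; first exact: I0.
exact/ID/IM/SI.
Qed.

Lemma ideal_gen_base S g : S g -> ideal_gen S g.
Proof. by move=> Sg; rewrite -[g]add0r -[g]mul1r; apply: ideal_genD (ideal_gen0 _). Qed.

Lemma is_ideal_gen S : is_ideal (ideal_gen S).
Proof.
split; first exact: ideal_gen0.
split=> [f g Sf | c f].
  by elim=> [|c h {}g Sh _ Sfg]; rewrite ?addr0 // addrA; apply: ideal_genD.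
elim=> [|c' h {}f Sh _ Scf]; first by rewrite mulr0; apply: ideal_gen0.
by rewrite mulrDr mulrA; apply: ideal_genD.
Qed.

Definition up_closed U := forall m m', U m -> (m <= m')%MM -> U m'.

(* For an up-closed set U of monomials, [msupp_in U] is the monomial ideal
   spanned by U. *)
Definition msupp_in U f := forall m, m \in msupp f -> U m.

Lemma is_ideal_msupp_in U : up_closed U -> is_ideal (msupp_in U).
Proof.
move=> Uup; split; first by move=> m; rewrite msupp0.
split=> [f g Uf Ug m /msuppD_le | c f Uf m /msuppM_le /allpairsP].
  by rewrite mem_cat => /orP[]; [apply: Uf | apply: Ug].
by case=> -[m1 m2] /= [_ /Uf Um2 ->]; apply: Uup Um2 (lem_addl _ _).
Qed.

Lemma msupp_inX U m : msupp_in U 'X_[m] <-> U m.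
Proof.
split=> [|Um m']; first by apply; rewrite msuppX mem_seq1.
by rewrite msuppX mem_seq1 => /eqP ->.
Qed.

Lemma msupp_in_min U I :
  is_ideal I -> (forall m, U m -> I 'X_[m]) -> forall f, msupp_in U f -> I f.
Proof.
case=> I0 [ID IM] UI f Uf; rewrite [f]mpolyE.
elim: (msupp f) (fun m mf => Uf m mf) => [|m s IHs] Us; first by rewrite big_nil.
rewrite big_cons; apply: ID; last by apply: IHs => m' m's; apply: Us; rewrite inE m's orbT.
by rewrite -mul_mpolyC; apply/IM/UI/Us; rewrite mem_head.
Qed.

Lemma mpolyX_divides m m' : (m <= m')%MM -> 'X_[m'] = 'X_[m' - m] * 'X_[m] :> R.
Proof. by move=> le_mm'; rewrite -mpolyXD submK. Qed.

Lemma msuppMX_in f m w :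
  w \in msupp (f * 'X_[m]) <-> exists2 t, t \in msupp f & w = (m + t)%MM.
Proof.
rewrite (perm_mem (msuppMX f m)); split; first by case/mapP=> t ft ->; exists t.
by case=> t ft ->; apply/mapP; exists t.
Qed.

Lemma msupp_inMX U f m :
  msupp_in U (f * 'X_[m]) <-> forall t, t \in msupp f -> U (m + t)%MM.
Proof.
split=> [Uf t ft | Uf w /msuppMX_in [t /Uf Ut ->] //].
by apply: Uf; rewrite mcoeff_msupp mcoeffMX -mcoeff_msupp.
Qed.

Definition mset_mul U V m := exists m1 m2, [/\ U m1, V m2 & (m1 + m2 <= m)%MM].

Lemma up_closed_mul U V : up_closed (mset_mul U V).
Proof.
by move=> m m' [m1 [m2 [Um1 Vm2 le]]] le'; exists m1, m2; split=> //; apply: lepm_trans le'.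
Qed.

Lemma ideal_mul_msupp_in U V I J : up_closed U ->
  (forall f, I f <-> msupp_in U f) -> (forall f, J f <-> msupp_in V f) ->
  forall f, ideal_mul I J f <-> msupp_in (mset_mul U V) f.
Proof.
move=> Uup IU JV f; split.
  apply: ideal_gen_min; first exact/is_ideal_msupp_in/up_closed_mul.
  move=> _ [g [h [/IU Ug [/JV Vh ->]]]] m /msuppM_le /allpairsP [[m1 m2] /= [g_m1 h_m2 ->]].
  by exists m1, m2; split; [apply: Ug | apply: Vh | apply: lepm_refl].
apply: msupp_in_min; first exact: is_ideal_gen.
move=> m [m1 [m2 [Um1 Vm2 le]]]; apply: ideal_gen_base.
exists 'X_[(m - (m1 + m2)) + m1], 'X_[m2]; split; last split.
- by apply/IU/msupp_inX; apply: Uup Um1 (lem_addl _ _).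
- exact/JV/msupp_inX.
- by rewrite -mpolyXD -addmA submK.
Qed.

Definition edge_mset (e : rel 'I_N) m := exists i j, e i j /\ (U_(i) + U_(j) <= m)%MM.

Fixpoint edge_pow_mset (e : rel 'I_N) k :=
  if k is k'.+1 then mset_mul (edge_pow_mset e k') (edge_mset e) else fun=> True.

Lemma up_closed_edge e : up_closed (edge_mset e).
Proof. by move=> m m' [i [j [eij le]]] le'; exists i, j; split=> //; apply: lepm_trans le'. Qed.

Lemma up_closed_edge_pow e k : up_closed (edge_pow_mset e k).
Proof. by case: k => [|k] //; apply: up_closed_mul. Qed.

Lemma edge_ideal_msupp_in e f : edge_ideal e f <-> msupp_in (edge_mset e) f.
Proof.
split.
  apply: ideal_gen_min; first exact/is_ideal_msupp_in/up_closed_edge.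
  move=> _ [i [j [eij ->]]]; rewrite -mpolyXD; apply/msupp_inX.
  by exists i, j; split=> //; apply: lepm_refl.
apply: msupp_in_min; first exact: is_ideal_gen.
move=> m [i [j [eij le]]]; rewrite (mpolyX_divides le) mpolyXD.
case: (is_ideal_gen (fun h => exists i j, e i j /\ h = 'X_i * 'X_j)) => _ [_ IM].
by apply/IM/ideal_gen_base; exists i, j.
Qed.

Lemma ideal_pow_edge e k f :
  ideal_pow (edge_ideal e) k f <-> msupp_in (edge_pow_mset e k) f.
Proof.
elim: k f => [|k IHk] f /=; first by split.
exact: (ideal_mul_msupp_in (@up_closed_edge_pow e k) IHk (@edge_ideal_msupp_in e)).
Qed.

Definition mfilter (B : pred 'X_{1..N}) f : R :=
  \sum_(m <- msupp f | B m) f@_m *: 'X_[m].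

Lemma mcoeff_mfilter B f w : (mfilter B f)@_w = if B w then f@_w else 0.
Proof.
rewrite /mfilter raddf_sum /=.
under eq_bigr do rewrite mcoeffZ mcoeffX.
rewrite -big_filter; have [wf|wf] := boolP (w \in [seq m <- msupp f | B m]).
  rewrite (bigD1_seq w) ?filter_uniq ?msupp_uniq //= eqxx mulr1 big1 => [|m /negbTE ->].
    by move: wf; rewrite mem_filter => /andP [-> _]; rewrite addr0.
  by rewrite mulr0.
rewrite big1_seq => [|m /andP [_ mf]]; last by rewrite (negbTE (memPn wf m mf)) mulr0.
move: wf; rewrite mem_filter negb_and mcoeff_msupp negbK.
by case: (B w) => //= /eqP.
Qed.

Lemma msupp_mfilter B f m : (m \in msupp (mfilter B f)) = B m && (m \in msupp f).
Proof. by rewrite !mcoeff_msupp mcoeff_mfilter; case: (B m); rewrite ?eqxx. Qed.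

Lemma msupp_sub_mfilter B f m :
  (m \in msupp (f - mfilter B f)) = ~~ B m && (m \in msupp f).
Proof.
by rewrite !mcoeff_msupp mcoeffB mcoeff_mfilter; case: (B m); rewrite ?subrr ?eqxx ?subr0.
Qed.

(* Writing hB for the part of h outside U, every monomial of g * hB is some
   m1 + m2 with m2 a monomial of hB, so g * hB, which lies in the ideal,
   must vanish. *)
Lemma msupp_in_cancel U V W g h : up_closed U ->
  (forall m1 m2, V m1 -> W m2 -> U (m1 + m2)%MM -> U m2) ->
  g != 0 -> msupp_in V g -> msupp_in W h -> msupp_in U (g * h) -> msupp_in U h.
Proof.
move=> Uup cancelU g_nz Vg Wh Ugh.
pose u m := if excluded_middle_informative (U m) then true else false.
have uP m : reflect (U m) (u m).
  by rewrite /u; case: excluded_middle_informative => /= ?; constructor.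
set hB := mfilter (predC u) h.
have U_good : msupp_in U (h - hB) by move=> m; rewrite msupp_sub_mfilter negbK => /andP [/uP].
have U_bad : msupp_in U (g * hB).
  have UI := is_ideal_msupp_in Uup; case: (UI) => _ [_ UM].
  have -> : g * hB = g * h - g * (h - hB) by rewrite mulrBr opprB addrC subrK.
  exact/(idealB UI Ugh)/UM.
suff hB0 : hB = 0 by rewrite -[h]subr0 -hB0.
apply/eqP; apply: contraT => hB_nz.
have : msupp (g * hB) != [::] by rewrite msupp_eq0 mulf_neq0.
case E: (msupp (g * hB)) => [|w s] // _; have : w \in msupp (g * hB) by rewrite E mem_head.
move=> gh_w; have /U_bad := gh_w; move: gh_w => /msuppM_le /allpairsP [[m1 m2] /= [g_m1]].
rewrite msupp_mfilter => /andP [/uP not_Um2 h_m2] -> /cancelU.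
by move=> /(_ (Vg _ g_m1) (Wh _ h_m2)).
Qed.

Lemma mnm_neq0 (m : 'X_{1..N}) : m != 0%MM -> exists i, (0 < m i)%N.
Proof.
move=> m_nz; apply/existsP; apply: contraR m_nz; rewrite negb_exists => /forallP m0.
by apply/eqP/mnmP => i; rewrite mnm0E; apply/eqP; rewrite -leqn0 leqNgt m0.
Qed.

Lemma mpolyX_var (m : 'X_{1..N}) i : (0 < m i)%N -> 'X_[m] = 'X_[m - U_(i)] * 'X_i :> R.
Proof. by move=> m_i; apply: mpolyX_divides; rewrite lep1mP -lt0n. Qed.

Lemma prime_mpolyX P m : is_prime P -> P 'X_[m] -> exists2 i, (0 < m i)%N & P 'X_i.
Proof.
move=> [_ [P1 Pprime]]; elim: {m}(mdeg m) {-2}m (erefl (mdeg m)) => [|d IHd] m.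
  by move/eqP; rewrite mdeg_eq0 => /eqP ->; rewrite mpolyX0.
move=> deg_m; have [i m_i] : exists i, (0 < m i)%N by apply: mnm_neq0; rewrite -mdeg_eq0 deg_m.
rewrite (mpolyX_var m_i) => /Pprime [|]; last by exists i.
have deg_mi : mdeg (m - U_(i)) = d.
  by have := mdegD (m - U_(i)) U_(i); rewrite submK ?lep1mP -?lt0n // mdeg1 deg_m; lia.
by case/(IHd _ deg_mi) => j; rewrite mnmBE => ? Pj; exists j => //; lia.
Qed.

Definition irrelevant_ideal f := f@_0%MM = 0.

Lemma is_prime_irrelevant : is_prime irrelevant_ideal.
Proof.
rewrite /irrelevant_ideal; split; last split.
- split; first exact: mcoeff0.
  split=> [f g f0 g0 | c f f0]; first by rewrite mcoeffD f0 g0 addr0.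
  by rewrite (rmorphM (mcoeff 0%MM)) /= f0 mulr0.
- by rewrite mcoeff1 eqxx; apply/eqP; rewrite oner_eq0.
- by move=> f g; rewrite (rmorphM (mcoeff 0%MM)) /= => /eqP; rewrite mulf_eq0 => /orP[] /eqP; auto.
Qed.

Lemma irrelevant_ideal_min I :
  is_ideal I -> (forall i, I 'X_i) -> forall f, irrelevant_ideal f -> I f.
Proof.
move=> Iideal IX f f0; apply: (msupp_in_min (U := fun m => m != 0%MM)) => //.
  move=> m /mnm_neq0 [i m_i]; rewrite (mpolyX_var m_i).
  by case: Iideal => _ [_ IM]; apply: IM.
by move=> m; rewrite mcoeff_msupp; apply: contra_neq => ->.
Qed.

Lemma prime_all_vars P :
  is_prime P -> (forall i, P 'X_i) -> forall f, P f <-> irrelevant_ideal f.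
Proof.
move=> [Pideal [P1 _]] PX f; split; last exact: irrelevant_ideal_min.
move=> Pf; set c := f@_0%MM.
have P_f0 : P (f - c%:MP).
  by apply: irrelevant_ideal_min => //; rewrite /irrelevant_ideal mcoeffB mcoeffC eqxx mulr1 subrr.
have P_c : P c%:MP by rewrite -[c%:MP](subKr f); apply: idealB.
apply/eqP; apply: contraT => c_nz; case: P1.
have -> : (1 : R) = c^-1%:MP * c%:MP by rewrite -mpolyCM mulVf // mpolyC1.
by case: Pideal => _ [_ PM]; apply: PM.
Qed.

Lemma ideal_gen_vars_irrelevant f :
  ideal_gen (fun h => exists2 i, i \in [set: 'I_N] & h = 'X_i) f <-> irrelevant_ideal f.
Proof.
split; last first.
  by apply: irrelevant_ideal_min => [|i]; [exact: is_ideal_gen | apply: ideal_gen_base; exists i].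
apply: ideal_gen_min; first by case: is_prime_irrelevant.
by move=> _ [i _ ->]; rewrite /irrelevant_ideal mcoeffX mnm1_eq0.
Qed.

Definition vars_ideal (T : pred 'I_N) := msupp_in (fun m => exists2 c, T c & (0 < m c)%N).

Lemma prime_vars_ideal P (T : pred 'I_N) : is_ideal P -> (forall c, T c -> P 'X_c) ->
  (forall g, P g -> msupp_in (fun m => forall c, T c -> m c = 0%N) g -> g = 0) ->
  forall f, P f <-> vars_ideal T f.
Proof.
move=> Pideal PX Pfree.
have vars_P f : vars_ideal T f -> P f.
  apply: msupp_in_min => // m [c Tc m_c]; rewrite (mpolyX_var m_c).
  by case: Pideal => _ [_ PM]; apply/PM/PX.
move=> f; split=> [Pf|]; last exact: vars_P.
set f0 := mfilter [pred m : 'X_{1..N} | [forall c, T c ==> (m c == 0%N)]] f.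
have T_f1 : vars_ideal T (f - f0).
  move=> m; rewrite msupp_sub_mfilter => /andP [/forallPn [c]].
  by rewrite negb_imply -lt0n => /andP [Tc m_c] _; exists c.
suff f00 : f0 = 0 by rewrite -[f]subr0 -f00.
apply: Pfree; first by rewrite -[f0](subKr f); apply: idealB => //; apply: vars_P.
by move=> m; rewrite msupp_mfilter => /andP [/forallP T0 _] c /(implyP (T0 c)) /eqP.
Qed.

End MonomialIdeals.

Section FinSums.
Variable I : finType.
Implicit Types (y : I -> nat) (i j : I).

Lemma sum_indicator i : \sum_j (j == i) = 1.
Proof. by rewrite (bigD1 i) //= eqxx big1 // => j /negbTE ->. Qed.

Lemma sum_gt0_witness y : 0 < \sum_i y i -> exists i, 0 < y i.
Proof.
move=> sum_gt0; apply/existsP; apply: contraLR sum_gt0; rewrite negb_exists => /forallP y0.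
by rewrite -leqNgt leqn0 sum_nat_eq0; apply/forallP => i; rewrite eqn0Ngt y0.
Qed.

Lemma leq_add_sum y i j : i != j -> y i + y j <= \sum_l y l.
Proof.
by move=> ij; rewrite (bigD1 i) //= (bigD1 j) 1?eq_sym //= addnA leq_addr.
Qed.

Lemma sum_nat_trim y k : k <= \sum_i y i ->
  exists2 y' : I -> nat, forall i, y' i <= y i & \sum_i y' i = k.
Proof.
elim: {y}(\sum_i y i - k) {-2}y (erefl (\sum_i y i - k)) => [|d IHd] y def_d le_k.
  by exists y => //; apply/eqP; rewrite eqn_leq le_k -subn_eq0 def_d.
have [i0 y_i0] : exists i0, 0 < y i0 by apply: sum_gt0_witness; lia.
pose y1 i := y i - (i == i0).
have sum_y1 : \sum_i y1 i + 1 = \sum_i y i.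
  rewrite -[1](sum_indicator i0) -big_split /=; apply: eq_bigr => i _.
  by rewrite /y1; case: eqP => [->|]; rewrite ?subn0 ?addn0 // subnK.
have [||y' le_y' sum_y'] := IHd y1; try lia.
by exists y' => // i; apply: leq_trans (le_y' i) (leq_subr _ _).
Qed.

End FinSums.

(* [greedy_matching h t] is the matching on the path with vertex weights
   [h :: t] that saturates each vertex as early as possible, and
   [greedy_cover h t] a vertex cover of that path of the same weight. *)
Fixpoint greedy_matching (h : nat) (t : seq nat) : seq nat :=
  if t is b :: t' then minn h b :: greedy_matching (b - minn h b) t' else [::].

Fixpoint greedy_cover (h : nat) (t : seq nat) : seq bool :=
  if t is b :: t' then
    let S := greedy_cover (b - minn h b) t' in
    if b <= h then false :: true :: behead S
    else if head false S then false :: S else true :: S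
  else [:: false].

Definition cover_weight (S : seq bool) (b : seq nat) :=
  \sum_(j < size b) nth false S j * nth 0 b j.

Section Greedy.
Implicit Types (h : nat) (t : seq nat).

Lemma size_greedy_matching h t : size (greedy_matching h t) = size t.
Proof. by elim: t h => //= b t IHt h; rewrite IHt. Qed.

Lemma size_greedy_cover h t : size (greedy_cover h t) = (size t).+1.
Proof.
elim: t h => //= b t IHt h; case: ifP => _ /=; first by rewrite size_behead IHt.
by case: ifP => _ /=; rewrite IHt.
Qed.

Lemma greedy_matching_fits h t j :
  nth 0 (0 :: greedy_matching h t) j + nth 0 (greedy_matching h t) j <= nth 0 (h :: t) j.
Proof.
elim: t h j => [|b t IHt] h [|[|j]] //=; rewrite ?nth_nil ?geq_minl //.
  by have := IHt (b - minn h b) 0; rewrite /=; lia.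
exact: (IHt (b - minn h b) j.+1).
Qed.

Lemma cover_weight_cons s S c b : cover_weight (s :: S) (c :: b) = s * c + cover_weight S b.
Proof. by rewrite /cover_weight /= big_ord_recl. Qed.

Lemma cover_weight_greedy h t :
  cover_weight (greedy_cover h t) (h :: t) = sumn (greedy_matching h t).
Proof.
elim: t h => [|b t IHt] h /=; first by rewrite /cover_weight big_ord_recl big_ord0.
have := IHt (b - minn h b); have := size_greedy_cover (b - minn h b) t.
case: (greedy_cover (b - minn h b) t) => [|s S] //= _; rewrite cover_weight_cons => IHs.
case: ifP => le_bh /=.
  have min_b : minn h b = b by apply/minn_idPr.
  by rewrite !cover_weight_cons; move: IHs; rewrite min_b subnn muln0; lia.
have min_h : minn h b = h by apply/minn_idPl; rewrite ltnW // ltnNge le_bh.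
by move: IHs; rewrite min_h; case: s => /= IHs; rewrite !cover_weight_cons /=; move: le_bh; lia.
Qed.

Lemma greedy_cover_covers h t j : j < size t ->
  nth false (greedy_cover h t) j || nth false (greedy_cover h t) j.+1.
Proof.
elim: t h j => [|b t IHt] h j //=.
have := IHt (b - minn h b); have := size_greedy_cover (b - minn h b) t.
case: (greedy_cover (b - minn h b) t) => [|s S] //= _ IHs.
case: ifP => _; first by case: j => [|[|j]] //= lt_jt; apply: (IHs j.+1).
by case: s IHs => IHs; case: j => [|j] //= lt_jt; apply: IHs.
Qed.

Lemma cover_weight_ge S b j : j < size b -> nth false S j * nth 0 b j <= cover_weight S b.
Proof. by move=> lt_jb; rewrite /cover_weight (bigD1 (Ordinal lt_jb)) //= leq_addr. Qed.

End Greedy.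

Section Cycle.
Variable n : nat.
Local Notation N := n.*2.+1.
Implicit Types (i j v c : 'I_N) (T : pred 'I_N) (y : 'I_N -> nat) (m a : 'X_{1..N}).

Lemma cycle_relE i j : cycle_rel i j = (j == ordS i) || (i == ordS j).
Proof. by rewrite /cycle_rel -!val_eqE. Qed.

Lemma val_ordS i : (ordS i : nat) = if i.+1 < N then i.+1 else 0.
Proof.
rewrite /=; case: ltnP => [/modn_small //|le_Ni].
have -> : i.+1 = N by have := ltn_ord i; lia.
exact: modnn.
Qed.

Lemma val_ord_pred i : (ord_pred i : nat) = if (i : nat) == 0 then n.*2 else i.-1.
Proof.
rewrite /= addnS /=; case: eqP => [->|i_nz]; first by rewrite modn_small.
have -> : i + n.*2 = i.-1 + N by lia.
by rewrite modnDr modn_small //; have := ltn_ord i; lia.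
Qed.

Lemma ordS_eq i v : (ordS i == v) = (i == ord_pred v).
Proof. by apply/eqP/eqP => [<-|->]; rewrite ?ordSK ?ord_predK. Qed.

Definition edge_mnm i : 'X_{1..N} := (U_(i) + U_(ordS i))%MM.

(* [y i] is the multiplicity of the edge {i, i + 1} in a multiset of edges;
   [edge_mdeg y] is the product of these edges. *)
Definition edge_mdeg y : 'X_{1..N} := [multinom y v + y (ord_pred v) | v < N].

Definition edges_divide k m := exists2 y, \sum_i y i = k & (edge_mdeg y <= m)%MM.

Definition vertex_cover T := forall i, T i || T (ordS i).

(* On a cycle, [T :\ c] stops being a cover iff a neighbour of [c] lies
   outside [T]. *)
Definition minimal_vertex_cover T :=
  vertex_cover T /\ forall c, T c -> ~~ T (ordS c) || ~~ T (ord_pred c).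

Lemma edge_mnmE i v : edge_mnm i v = (i == v) + (ordS i == v).
Proof. by rewrite mnmDE !mnm1E. Qed.

Lemma edge_mdegE y v : edge_mdeg y v = y v + y (ord_pred v).
Proof. exact: mnmE. Qed.

Lemma edge_mdeg_add y y' i k : (forall v, y' v = y v + (v == i) * k) ->
  edge_mdeg y' = (edge_mdeg y + edge_mnm i *+ k)%MM.
Proof.
move=> def_y'; apply/mnmP => v; rewrite mnmDE mulmnE edge_mnmE !edge_mdegE !def_y'.
by rewrite ordS_eq (eq_sym i v) (eq_sym i (ord_pred v)); lia.
Qed.

Lemma edges_divide_up k m m' : edges_divide k m -> (m <= m')%MM -> edges_divide k m'.
Proof. by case=> y sum_y le_ym le_mm'; exists y => //; apply: lepm_trans le_mm'. Qed.

Lemma edges_divide0 m : edges_divide 0 m.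
Proof. by exists (fun=> 0); rewrite ?big1 //; apply/mnm_lepP => v; rewrite edge_mdegE. Qed.

Lemma edges_divide_add k m i l :
  edges_divide k m -> edges_divide (k + l) (m + edge_mnm i *+ l).
Proof.
case=> y sum_y /mnm_lepP le_ym; exists (fun v => y v + (v == i) * l).
  by rewrite big_split /= sum_y -big_distrl /= sum_indicator mul1n.
rewrite (edge_mdeg_add (y := y) (i := i) (k := l)) //; apply/mnm_lepP => v.
by rewrite !mnmDE leq_add2r.
Qed.

Lemma edges_divide_edge i : edges_divide 1 (edge_mnm i).
Proof. by have := edges_divide_add i 1 (edges_divide0 0%MM); rewrite add0m mulm1n. Qed.

Lemma edges_divideS k m :
  edges_divide k.+1 m <-> exists i m', edges_divide k m' /\ (m' + edge_mnm i <= m)%MM.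
Proof.
split=> [[y sum_y le_ym] | [i [m' [div_m' le_m'm]]]]; last first.
  by apply: edges_divide_up le_m'm; rewrite -addn1 -[edge_mnm i]mulm1n; apply: edges_divide_add.
have [i y_i] : exists i, 0 < y i by apply: sum_gt0_witness; rewrite sum_y.
pose y' v := y v - (v == i).
have y'E v : y v = y' v + (v == i).
  by rewrite /y'; case: eqP => [->|]; rewrite ?subn0 ?addn0 // subnK.
exists i, (edge_mdeg y'); split.
  exists y'; last exact: lepm_refl.
  have : \sum_v y' v + \sum_v (v == i) = k.+1.
    by rewrite -big_split -sum_y; apply: eq_bigr => v _; rewrite /= -y'E.
  by rewrite sum_indicator addn1 => -[].
by rewrite -[edge_mnm i]mulm1n -(@edge_mdeg_add y' y i 1) // => v; rewrite muln1 -y'E.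
Qed.

Lemma edge_mset_cycle m : edge_mset (@cycle_rel N) m <-> exists i, (edge_mnm i <= m)%MM.
Proof.
split=> [[i [j [+ le_m]]] | [i le_m]]; last by exists i, (ordS i); rewrite cycle_relE eqxx.
by rewrite cycle_relE => /orP[] /eqP def; [exists i | exists j]; rewrite /edge_mnm -def // addmC.
Qed.

Lemma edge_pow_mset_cycle k m : edge_pow_mset (@cycle_rel N) k m <-> edges_divide k m.
Proof.
elim: k m => [|k IHk] m /=; first by split=> // _; apply: edges_divide0.
rewrite edges_divideS; split.
  case=> m1 [m2 [/IHk div_m1 /edge_mset_cycle [i /mnm_lepP le_i] /mnm_lepP le]].
  exists i, m1; split=> //; apply/mnm_lepP => v; apply: leq_trans (le v).
  by rewrite (mnmDE v m1 (edge_mnm i)) (mnmDE v m1 m2) leq_add2l.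
case=> i [m' [/IHk div_m' le]]; exists m', (edge_mnm i); split=> //.
by apply/edge_mset_cycle; exists i; apply: lepm_refl.
Qed.

Lemma edges_divide_cover T k m :
  vertex_cover T -> edges_divide k m -> k <= \sum_(v | T v) m v.
Proof.
move=> coverT [y <- /mnm_lepP le_ym].
apply: (@leq_trans (\sum_(v | T v) (y v + y (ord_pred v)))); last first.
  by apply: leq_sum => v _; rewrite -edge_mdegE.
rewrite big_split /= [X in _ <= _ + X](reindex_inj (@ordS_inj N)) /=.
under [X in _ <= _ + X]eq_bigr do rewrite ordSK.
rewrite (big_mkcond T) (big_mkcond (fun i => T (ordS i))) -big_split /=.
apply: leq_sum => i _; have := coverT i.
by case: (T i); case: (T (ordS i)); rewrite //= ?addn0 ?leq_addr.
Qed.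

Lemma edges_divide_mdeg k m : edges_divide k m -> k.*2 <= mdeg m.
Proof.
move=> [y <- /mnm_lepP le_ym]; rewrite mdegE.
apply: (@leq_trans (\sum_v (y v + y (ord_pred v)))); last first.
  by apply: leq_sum => v _; rewrite -edge_mdegE.
by rewrite big_split /= (reindex_inj (@ord_pred_inj N)) /= addnn.
Qed.

Hypothesis n_gt0 : 0 < n.

Lemma ord_pred_neq i : (ord_pred i == i) = false.
Proof.
apply/eqP => /(congr1 (@nat_of_ord _)); rewrite val_ord_pred.
by have := ltn_ord i; case: eqP; lia.
Qed.

(* A product of k edges has degree at most k at each vertex. *)
Lemma edges_divide_saturate T k m1 m2 :
  (forall v, T v -> m1 v = 0) -> (forall v, ~~ T v -> k <= m2 v) ->
  edges_divide k (m1 + m2) -> edges_divide k m2.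
Proof.
move=> m1T m2T [y sum_y /mnm_lepP le_y]; exists y => //; apply/mnm_lepP => v.
case: (boolP (T v)) => [Tv | /m2T]; first by have := le_y v; rewrite mnmDE m1T.
apply: leq_trans; rewrite edge_mdegE -sum_y leq_add_sum //.
by rewrite eq_sym ord_pred_neq.
Qed.

End Cycle.

Ltac case_ifs := repeat match goal with |- context [if ?b then _ else _] =>
  lazymatch b with context [if _ then _ else _] => fail | _ => case: (boolP b) => ? end end;
  lia.

Section CutCycle.
Variable n : nat.
Local Notation N := n.*2.+1.
Variable d : 'I_N.
Implicit Types (v : 'I_N) (T : pred 'I_N).

Definition step j : 'I_N := inord (if d + j < N then d + j else d + j - N).
Definition steps v := if d <= v then v - d else v + N - d.

Lemma val_step j : j < N -> step j = (if d + j < N then d + j else d + j - N) :> nat.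
Proof. by move=> lt_jN; rewrite /step inordK //; have := ltn_ord d; case_ifs. Qed.

Lemma steps_lt v : steps v < N.
Proof. by rewrite /steps; have := ltn_ord d; have := ltn_ord v; case_ifs. Qed.

Lemma steps_step j : j < N -> steps (step j) = j.
Proof. by move=> lt_jN; rewrite /steps val_step //; have := ltn_ord d; case_ifs. Qed.

Lemma step_steps v : step (steps v) = v.
Proof.
apply: val_inj; rewrite /= val_step ?steps_lt // /steps.
by have := ltn_ord d; have := ltn_ord v; case_ifs.
Qed.

Lemma step_inj : injective (fun j : 'I_N => step j).
Proof. by move=> i j /(congr1 steps); rewrite !steps_step //; apply: val_inj. Qed.

Lemma steps_base : steps d = 0.
Proof. by rewrite /steps leqnn subnn. Qed.

Lemma steps_eq0 v : (steps v == 0) = (v == d).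
Proof.
apply/eqP/eqP => [steps_v0|->]; last exact: steps_base.
by rewrite -(step_steps v) steps_v0 -(step_steps d) steps_base.
Qed.

Lemma steps_ord_pred v : v != d -> steps (ord_pred v) = (steps v).-1.
Proof.
rewrite -steps_eq0 /steps val_ord_pred //.
by have := ltn_ord d; have := ltn_ord v; case_ifs.
Qed.

Lemma steps_ordS v : steps (ordS v) = if (steps v).+1 < N then (steps v).+1 else 0.
Proof. by rewrite /steps val_ordS //; have := ltn_ord d; have := ltn_ord v; case_ifs. Qed.

Variables (k : nat) (a : 'X_{1..N}).

(* Cutting the cycle at [d] gives a path of [N + 1] vertices whose two ends
   are copies of [d], both given weight [k]; its weights are [k :: cut_path]. *)
Definition cut_path := [seq a (step j) | j <- iota 1 n.*2] ++ [:: k].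

Lemma size_cut_path : size cut_path = N.
Proof. by rewrite size_cat size_map size_iota addn1. Qed.

Lemma nth_cut_path_last : nth 0 (k :: cut_path) N = k.
Proof. by rewrite /= nth_cat size_map size_iota ltnn subnn. Qed.

Lemma nth_cut_path j : 0 < j < N -> nth 0 (k :: cut_path) j = a (step j).
Proof.
case: j => [|j] //= lt_jN; rewrite nth_cat size_map size_iota ifT; last lia.
by rewrite (nth_map 0) ?size_iota ?nth_iota //; lia.
Qed.

Lemma edges_divide_of_matching :
  0 < n -> k <= a d -> k <= sumn (greedy_matching k cut_path) -> edges_divide k a.
Proof.
set z := greedy_matching k cut_path => n_gt0 le_k_ad le_k_z.
have size_z : size z = N by rewrite size_greedy_matching size_cut_path.
pose y v := nth 0 z (steps v).
have sum_y : \sum_v y v = sumn z.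
  rewrite (sumnE z) (big_nth 0) big_mkord size_z (reindex_inj step_inj) /=.
  by apply: eq_bigr => j _; rewrite /y steps_step.
have y_fits v : v != d -> edge_mdeg y v <= a v.
  move=> v_d; rewrite edge_mdegE /y steps_ord_pred //.
  have steps_v : 0 < steps v by rewrite lt0n steps_eq0.
  have := greedy_matching_fits k cut_path (steps v).
  rewrite nth_cut_path ?steps_v ?steps_lt // step_steps -/z.
  by case: (steps v) steps_v => [|j] //= _; rewrite addnC.
have [y' le_y'y sum_y'] : exists2 y', forall v, y' v <= y v & \sum_v y' v = k.
  by apply: sum_nat_trim; rewrite sum_y.
exists y' => //; apply/mnm_lepP => v; case: (eqVneq v d) => [->|v_d].
  rewrite edge_mdegE; apply: leq_trans le_k_ad.
  by rewrite -sum_y' leq_add_sum // eq_sym ord_pred_neq.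
by apply: leq_trans (y_fits v v_d); rewrite !edge_mdegE leq_add.
Qed.

Lemma small_cover_of_matching : sumn (greedy_matching k cut_path) < k ->
  exists2 T, vertex_cover T & \sum_(v | T v) a v < k.
Proof.
set S := greedy_cover k cut_path => lt_z_k.
have weight_S := cover_weight_greedy k cut_path; rewrite -/S in weight_S.
have S_end j : j <= N -> nth 0 (k :: cut_path) j = k -> nth false S j = false.
  move=> le_jN w_j; have := @cover_weight_ge S (k :: cut_path) j.
  rewrite /= size_cut_path ltnS weight_S w_j => /(_ le_jN).
  by case: (nth false S j) lt_z_k => //=; lia.
have S0 := S_end 0 isT erefl; have SN := S_end N (leqnn N) nth_cut_path_last.
exists (fun v => nth false S (steps v)).
  move=> i; rewrite steps_ordS.
  have := @greedy_cover_covers k cut_path (steps i); rewrite size_cut_path steps_lt -/S.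
  move=> /(_ isT) cover_i; case: ifP => [_ //|/negbT]; rewrite -leqNgt => le_N.
  move: cover_i; have -> : (steps i).+1 = N by have := steps_lt i; lia.
  by rewrite SN S0.
apply: leq_ltn_trans lt_z_k; rewrite -weight_S /cover_weight.
rewrite [size _]/= size_cut_path big_ord_recr /=; apply: leq_trans (leq_addr _ _).
rewrite big_mkcond (reindex_inj step_inj) /=; apply: leq_sum => j _.
rewrite steps_step //; case: j => [[|j] lt_jN] /=; first by rewrite S0.
have := @nth_cut_path j.+1 lt_jN; rewrite /= => ->.
by case: (nth false S j.+1); rewrite /= ?mul1n ?mul0n.
Qed.

End CutCycle.

(* Koenig duality for the path obtained by cutting the cycle at [d]. *)
Lemma edges_divide_or_small_cover n (d : 'I_n.*2.+1) k (a : 'X_{1..n.*2.+1}) :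
  0 < n -> k <= a d ->
  edges_divide k a \/ exists2 T, vertex_cover T & \sum_(v | T v) a v < k.
Proof.
move=> n_gt0 le_k_ad; case: (leqP k (sumn (greedy_matching k (cut_path d k a)))).
  by move=> le_k_z; left; exact (edges_divide_of_matching n_gt0 le_k_ad le_k_z).
by move=> lt_z_k; right; exact (small_cover_of_matching lt_z_k).
Qed.

Section OddCycle.
Variable n : nat.
Hypothesis n_gt0 : 0 < n.
Local Notation N := n.*2.+1.
Implicit Types (i v c : 'I_N) (T S : pred 'I_N) (a : 'X_{1..N}).

Definition mnm_ones : 'X_{1..N} := [multinom 1 | _ < N].

Lemma mdeg_ones : mdeg mnm_ones = N.
Proof. by rewrite mdegE (eq_bigr (fun=> 1)) ?sum1_card ?card_ord // => i _; rewrite mnmE. Qed.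

Lemma mdeg_edge i : mdeg (edge_mnm i) = 2.
Proof. by rewrite mdegD !mdeg1. Qed.

Lemma sum_even m : \sum_(j < m.*2.+1) ~~ odd j = m.+1.
Proof.
elim: m => [|m IHm]; first by rewrite big_ord_recr big_ord0.
by rewrite doubleS big_ord_recr big_ord_recr /= IHm odd_double /=; lia.
Qed.

(* The edges {i + 2j, i + 2j + 1}, j = 0..n, meet every vertex of the odd
   cycle once, except [i], which they meet twice. *)
Lemma edges_divide_ones i : edges_divide n.+1 (mnm_ones + U_(i)).
Proof.
exists (fun v => ~~ odd (steps i v)).
  rewrite (reindex_inj (@step_inj _ i)) /= -(sum_even n).
  by apply: eq_bigr => j _; rewrite steps_step.
apply/mnm_lepP => v; rewrite edge_mdegE mnmDE mnm1E mnmE.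
have [<-|v_i] := eqVneq i v.
  have -> : steps i (ord_pred i) = n.*2.
    have := steps_ordS i (ord_pred i); rewrite ord_predK steps_base.
    by have := steps_lt i (ord_pred i); case: ifP; lia.
  by rewrite steps_base odd_double.
rewrite steps_ord_pred 1?eq_sym //.
have : steps i v != 0 by rewrite steps_eq0 eq_sym.
by case: (steps i v) => [|j] //= _; case: (odd j).
Qed.

Lemma sum_addU S c a : \sum_(u | S u) (U_(c) + a)%MM u = S c + \sum_(u | S u) a u.
Proof.
under eq_bigr do rewrite mnmDE mnm1E; rewrite big_split /=; congr (_ + _).
case S_c: (S c); last by rewrite big1 // => u; case: eqP => // <-; rewrite S_c.
by rewrite (bigD1 c) //= eqxx big1 // => u /andP [_ /negbTE]; rewrite eq_sym => ->.
Qed.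

Lemma saturated_vertex_cover T k a :
  (forall v, ~~ T v -> k <= a v) -> ~ edges_divide k a -> vertex_cover T.
Proof.
move=> a_ge not_div i; apply/negPn/negP; rewrite negb_or => /andP [/a_ge a_i /a_ge a_Si].
apply: not_div; have := edges_divide_add i k (edges_divide0 0%MM).
rewrite add0m add0n => /edges_divide_up; apply; apply/mnm_lepP => v.
rewrite mulmnE edge_mnmE.
have [<-|v_i] := eqVneq i v; first by rewrite ordS_eq eq_sym ord_pred_neq /=; lia.
by have [<-|] := eqVneq (ordS i) v => /=; lia.
Qed.

Lemma minimal_cover_edge T c : minimal_vertex_cover T -> T c ->
  exists i d, ~~ T d /\ edge_mnm i = (U_(c) + U_(d))%MM.
Proof.
case=> _ min_T /min_T /orP[T_Sc | T_Pc]; first by exists c, (ordS c).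
by exists (ord_pred c), (ord_pred c); rewrite /edge_mnm ord_predK addmC.
Qed.

Lemma saturated_minimal_cover T k a v0 : ~~ T v0 ->
  (forall v, ~~ T v -> k <= a v) -> ~ edges_divide k a ->
  (forall c, T c -> edges_divide k (U_(c) + a)) -> minimal_vertex_cover T.
Proof.
move=> T_v0 a_ge not_div div_c; have cover_T := saturated_vertex_cover a_ge not_div.
split=> // c T_c; apply/negPn/negP; rewrite negb_or !negbK => /andP [T_Sc T_Pc].
have [//|[S cover_S small_S]] := edges_divide_or_small_cover n_gt0 (a_ge v0 T_v0).
have [/existsP [v /andP [T_v S_v]] | /existsPn T_S] := boolP [exists v, T v && ~~ S v].
  by have := edges_divide_cover cover_S (div_c v T_v); rewrite sum_addU (negbTE S_v); lia.
have {}T_S v : T v -> S v by move=> T_v; have := T_S v; rewrite T_v negbK.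
have cover_S' : vertex_cover (fun u => S u && (u != c)).
  move=> i; have [->|i_c] := eqVneq i c.
    by rewrite andbF (T_S _ T_Sc) /= ordS_eq eq_sym ord_pred_neq.
  have [Si_c|] := eqVneq (ordS i) c; last by rewrite !andbT => _; apply: cover_S.
  by rewrite -[i]ordSK Si_c T_S.
have := edges_divide_cover cover_S' (div_c c T_c); rewrite sum_addU eqxx andbF add0n.
have : \sum_(u | S u && (u != c)) a u <= \sum_(u | S u) a u.
  by rewrite [X in _ <= X](bigD1 c) ?T_S //= leq_addl.
by move=> le_sub le_k; move: small_S; rewrite ltnNge (leq_trans le_k le_sub).
Qed.

End OddCycle.

Section OddCycleEdgeIdeal.
Local Open Scope ring_scope.
Variables (K : fieldType) (n : nat).
Hypothesis n_gt0 : (0 < n)%N.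
Local Notation N := n.*2.+1.
Local Notation R := {mpoly K[N]}.
Local Notation I := (edge_ideal (K := K) (@cycle_rel N)).
Implicit Types (f g : R) (P : R -> Prop) (T : pred 'I_N).

Lemma edge_pow_cycleE k f : ideal_pow I k f <-> msupp_in (edges_divide k) f.
Proof.
rewrite ideal_pow_edge.
by split=> If m /If /edge_pow_mset_cycle.
Qed.

Lemma is_ideal_edge_pow k : is_ideal (ideal_pow I k).
Proof.
apply: (is_ideal_ext (@edge_pow_cycleE k)); apply: is_ideal_msupp_in.
exact: edges_divide_up.
Qed.

(* The witness has degree 2k - 1, too small for I^k, but multiplied by any
   variable it becomes divisible by k edges (see [edges_divide_ones]). *)
Lemma Ass_irrelevant_edge_pow k P : (n < k)%N -> is_prime P ->
  (forall f, P f <-> irrelevant_ideal f) -> Ass (ideal_pow I k) P.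
Proof.
move=> lt_nk P_prime PE; split=> //.
pose w := (mnm_ones n + edge_mnm ord0 *+ (k - n.+1))%MM.
exists 'X_[w] => g; rewrite PE edge_pow_cycleE msupp_inMX; split=> [g0 t g_t | div_w].
  have [i t_i] : exists i, (0 < t i)%N.
    by apply: mnm_neq0; apply: contraTneq g_t => ->; rewrite mcoeff_msupp g0 eqxx.
  have := edges_divide_add ord0 (k - n.+1) (edges_divide_ones n_gt0 i).
  rewrite subnKC // => /edges_divide_up; apply; apply/mnm_lepP => v.
  by rewrite !mnmDE mnm1E; case: eqP => [<-|_]; lia.
apply/eqP; apply: contraT => g0_nz.
have /edges_divide_mdeg : edges_divide k (w + 0) by apply: div_w; rewrite mcoeff_msupp.
by rewrite addm0 mdegD mdegMn mdeg_edge mdeg_ones; lia.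
Qed.

(* The witness is the product of the variables outside T times e^(k-1), for
   an edge e at some c0 in T: a variable x_c with c in T completes an edge
   with a neighbour of c outside T, while a monomial free of T-variables has
   weight only k - 1 on the cover T. *)
Lemma Ass_vars_ideal_edge_pow T k P : minimal_vertex_cover T -> (0 < k)%N ->
  is_prime P -> (forall f, P f <-> vars_ideal T f) -> Ass (ideal_pow I k) P.
Proof.
move=> min_T k_gt0 P_prime PT; split=> //.
have [c0 T_c0] : exists c0, T c0 by case/orP: (min_T.1 ord0) => ?; eexists; eassumption.
have [e0 [d0 [T_d0 e0E]]] := minimal_cover_edge min_T T_c0.
pose w := ([multinom ~~ T v | v < N] + edge_mnm e0 *+ k.-1)%MM.
exists 'X_[w] => g; rewrite PT edge_pow_cycleE msupp_inMX; split=> [Tg t g_t | div_w t g_t].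
  have [c T_c t_c] := Tg t g_t; have [e [d [T_d eE]]] := minimal_cover_edge min_T T_c.
  have := edges_divide_add e0 k.-1 (edges_divide_edge e).
  rewrite add1n prednK // => /edges_divide_up; apply; apply/mnm_lepP => v.
  have d_c : d != c by apply: contraNneq T_d => ->.
  rewrite eE !mnmDE mulmnE !mnmDE !mnm1E mnmE.
  have [<-|_] := eqVneq c v; first by rewrite (negbTE d_c); lia.
  by have [<-|_] := eqVneq d v; rewrite ?T_d /=; lia.
apply: NNPP => no_c; have t_T v : T v -> t v = 0%N.
  by move=> T_v; apply/eqP; rewrite -leqn0 leqNgt; apply/negP => t_v; apply: no_c; exists v.
have := edges_divide_cover min_T.1 (div_w t g_t).
have wtE v : T v -> (w + t)%MM v = ((c0 == v) * k.-1)%N.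
  move=> T_v; rewrite /w !mnmDE mnmE T_v mulmnE e0E mnmDE !mnm1E t_T //.
  have -> : (d0 == v) = false by apply: contraNF T_d0 => /eqP ->.
  by rewrite /= add0n !addn0.
rewrite (bigD1 c0) //= wtE // eqxx mul1n big1 => [|v /andP [T_v v_c0]].
  by rewrite addn0 -ltnS prednK // ltnn.
by rewrite wtE // eq_sym (negbTE v_c0).
Qed.

Definition outside_mnm T k : 'X_{1..N} := [multinom if T v then 0%N else k | v < N].

Lemma colon_edge_pow_free k P f T :
  (forall g, P g <-> ideal_pow I k (g * f)) -> ~ P 'X_[outside_mnm T k] ->
  forall g, P g -> msupp_in (fun m => forall c, T c -> m c = 0%N) g -> g = 0.
Proof.
move=> Pf P_out g Pg T_free; apply/eqP/negPn/negP => g_nz; apply: P_out; apply/Pf.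
have div_up : up_closed (@edges_divide n k) by move=> m m'; apply: edges_divide_up.
have out_h :
    msupp_in (fun m => forall v, ~~ T v -> (k <= m v)%N) (f * 'X_[outside_mnm T k]).
  by apply/msupp_inMX => t _ v T_v; rewrite mnmDE mnmE (negbTE T_v) leq_addr.
have div_gh : msupp_in (edges_divide k) (g * (f * 'X_[outside_mnm T k])).
  rewrite mulrA [_ * 'X_[_]]mulrC; apply/edge_pow_cycleE.
  by case: (is_ideal_edge_pow k) => _ [_ IM]; apply/IM/Pf.
apply/edge_pow_cycleE; rewrite mulrC.
exact: (msupp_in_cancel div_up (@edges_divide_saturate n n_gt0 T k) g_nz T_free out_h div_gh).
Qed.

Lemma Ass_edge_pow_cycle k P : Ass (ideal_pow I k) P ->
  (forall f, P f <-> irrelevant_ideal f) \/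
  exists2 T, minimal_vertex_cover T & forall f, P f <-> vars_ideal T f.
Proof.
case=> P_prime [f Pf]; have P_ideal := P_prime.1.
pose T v := if excluded_middle_informative (P 'X_v) then true else false.
have TP v : T v <-> P 'X_v by rewrite /T; case: excluded_middle_informative.
have [T_all | [v0 T_v0]] : (forall v, T v) \/ exists v0, ~~ T v0.
- by case: (boolP [forall v, T v]) => [/forallP | /forallPn]; [left | right].
- by left; apply: prime_all_vars => // i; apply/TP.
set out := outside_mnm T k.
have P_out : ~ P 'X_[out] by case/prime_mpolyX => // i; rewrite mnmE => + /TP T_i; rewrite T_i.
have [t f_t not_div] : exists2 t, t \in msupp f & ~ edges_divide k (out + t).
  apply: NNPP => no_t; apply: P_out; apply/Pf/edge_pow_cycleE; rewrite mulrC.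
  by apply/msupp_inMX => t f_t; apply: NNPP => not_div; apply: no_t; exists t.
right; exists T; last first.
  by apply: (prime_vars_ideal P_ideal _ (colon_edge_pow_free Pf P_out)) => c /TP.
apply: (saturated_minimal_cover n_gt0 T_v0 _ not_div) => [v T_v | c T_c].
  by rewrite mnmDE mnmE (negbTE T_v) leq_addr.
have : P ('X_[U_(c) + out]) by rewrite mpolyXD mulrC; case: P_ideal => _ [_ PM]; apply/PM/TP.
by move/Pf/edge_pow_cycleE; rewrite mulrC addmA => /msupp_inMX; apply.
Qed.

End OddCycleEdgeIdeal.

Theorem corollary4p6 (K : fieldType) (n : nat) (hn : (1 <= n)%N) :
  nearly_copersistent (edge_ideal (K := K) (@cycle_rel n.*2.+1)).
Proof.
have M_irrelevant := @ideal_gen_vars_irrelevant K n.*2.+1.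
exists n, (ideal_gen (fun h => exists2 i, i \in [set: 'I_n.*2.+1] & h = 'X_i)).
split=> //.
- by split; [exact: is_prime_ext M_irrelevant (is_prime_irrelevant _ _) | exists setT].
- move=> m /andP [m_gt0 _] P /[dup] [[P_prime _]] /(Ass_edge_pow_cycle hn) [PE | [T T_min PT]].
    by right=> f; rewrite PE M_irrelevant.
  by left; exact (Ass_vars_ideal_edge_pow hn T_min m_gt0 P_prime PT).
- move=> m lt_nm P /[dup] [[P_prime _]] /(Ass_edge_pow_cycle hn) [PE | [T T_min PT]].
    exact (Ass_irrelevant_edge_pow hn lt_nm P_prime PE).
  exact (Ass_vars_ideal_edge_pow hn T_min (leq_ltn_trans (leq0n n) lt_nm) P_prime PT).
Qed.
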